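(* Let $\lambda\in\mathbb R$, $G_\lambda(x)=\frac{x^3}{8} - \frac{\lambda x^2}{2} + \frac{\lambda^2 x}{2}$, and let $r\ge 0$ be a constant. For integers $k$ with $(1\vee 3\lambda) n^{2/3}\le k \le n^{3/4}$ and $|\lambda|\le n^{1/12}$, \[\frac{1}{n^{2/3}}\sum_{j=k}^{\lfloor n^{3/4}\rfloor} \Big(\frac{j}{n^{2/3}}\Big)^{r} e^{-G_\lambda(j/n^{2/3})} = \frac{(k/n^{2/3})^{r}}{G'_\lambda(k/n^{2/3})} e^{-G_\lambda(k/n^{2/3})} \Big(1+O\big(\tfrac{n^2}{k^3}\big)\Big) + O\big(n^{(r-2)/12}e^{-G_\lambda(n^{1/12})}\big).\]
   Context: $G'_\lambda$ is the derivative of $G_\lambda$; $x\vee y=\max(x,y)$. $f=g(1+O(h))+O(h')$ means $|f-g|\le C|g|h+Ch'$ for a constant $C$ depending only on $r$, for all sufficiently large $n$ and all parameters satisfying the hypotheses. *)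

From Stdlib Require Import Reals List.
Open Scope R_scope.

Definition G (lam x : R) : R := x ^ 3 / 8 - lam * x ^ 2 / 2 + lam ^ 2 * x / 2.

Definition G' (lam x : R) : R := 3 * x ^ 2 / 8 - lam * x + lam ^ 2 / 2.

(* floor of a real, as a natural number (for nonnegative arguments) *)
Definition nfloor (x : R) : nat := Z.to_nat (Int_part x).

(* sum_{j=a}^{b} f j  (empty if b < a) *)
Definition sum_range (a b : nat) (f : nat -> R) : R :=
  fold_right Rplus 0 (map f (seq a (S b - a))).

From Stdlib Require Import Reals Lra Lia Psatz List ZArith.
Open Scope R_scope.

(* Write w(x) = x^r e^(-G(x)) and Phi = w / G'.  In the regime x >= max(1, 3 lam), G'(x) is
   comparable to x^2 + lam^2, and a second-order expansion of G gives, for a mesh step d,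
     d w(x) = Phi(x) - Phi(x + d) + O(d w(x) / x^3).
   Telescoping over the mesh points j d (d = n^(-2/3), k <= j <= n^(3/4)), the errors add up to
   O(x_k^-3) d sum_j w(x_j) = O(Phi(x_k) n^2 / k^3), because w decays geometrically along the mesh
   with ratio e^(-d G'(x_k)).  What is left is the boundary term Phi near n^(1/12). *)

Lemma exp_le_compat a b : a <= b -> exp a <= exp b.
Proof. intros [Hlt | ->]; [left; apply exp_increasing; exact Hlt | lra]. Qed.

Lemma ln_le_compat a b : 0 < a -> a <= b -> ln a <= ln b.
Proof. intros Ha [Hlt | ->]; [left; apply ln_increasing; assumption | lra]. Qed.

Lemma exp_sub1_abs_le t : Rabs t <= 1 -> Rabs (exp t - 1) <= 3 * Rabs t.
Proof.
  intros Ht.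
  pose proof (exp_ineq1_le t).
  pose proof (exp_ineq1_le (- t)).
  assert (Hinv : exp t * exp (- t) = 1)
    by (rewrite <- exp_plus, Rplus_opp_r; apply exp_0).
  destruct (Rle_or_lt 0 t) as [Hp | Hn].
  - rewrite Rabs_right in Ht by lra.
    rewrite (Rabs_right t), Rabs_right by lra.
    assert (Hle3 : exp t <= 3)
      by (apply Rle_trans with (exp 1); [apply exp_le_compat; lra | apply exp_le_3]).
    assert (exp t * (1 - t) <= 1) by (pose proof (exp_pos t); nra).
    nra.
  - rewrite (Rabs_left t) by lra.
    assert (exp t <= 1) by (rewrite <- exp_0; apply exp_le_compat; lra).
    rewrite Rabs_left1; lra.
Qed.

Lemma exp_neg_taylor u : 0 <= u <= 1 -> Rabs (u - 1 + exp (- u)) <= u ^ 2.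
Proof.
  intros Hu.
  pose proof (exp_ineq1_le (- u)).
  assert (Hsq : (1 + u / 2) ^ 2 <= exp u).
  { replace u with (u / 2 + u / 2) at 2 by field.
    rewrite exp_plus. pose proof (exp_ineq1_le (u / 2)). nra. }
  assert (Hinv : exp u * exp (- u) = 1)
    by (rewrite <- exp_plus, Rplus_opp_r; apply exp_0).
  pose proof (exp_pos (- u)).
  assert (exp (- u) <= 1 - u + u ^ 2).
  { assert (1 <= (1 - u + u ^ 2) * (1 + u / 2) ^ 2) by nra. nra. }
  rewrite Rabs_right; lra.
Qed.

Lemma ln_shift_bounds x t : 0 < x -> 0 <= t -> 0 <= ln (x + t) - ln x <= t / x.
Proof.
  intros Hx Ht. split.
  - pose proof (ln_le_compat x (x + t)); lra.
  - assert (Hexp : x + t <= x * exp (t / x)).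
    { pose proof (exp_ineq1_le (t / x)).
      replace (x + t) with (x * (1 + t / x)) by (field; lra).
      apply Rmult_le_compat_l; lra. }
    apply ln_le_compat in Hexp; [|lra].
    rewrite ln_mult, ln_exp in Hexp by (try apply exp_pos; lra). lra.
Qed.

Lemma exp_perturb_bound u e Q : 0 <= u <= 1 -> Rabs e <= 1 -> 0 < Q <= 1 ->
  Rabs (u - 1 + exp (- u + e) * Q) <= u ^ 2 + 3 * Rabs e + (1 - Q).
Proof.
  intros Hu He HQ.
  replace (u - 1 + exp (- u + e) * Q) with
    ((u - 1 + exp (- u)) + exp (- u) * Q * (exp e - 1) - exp (- u) * (1 - Q))
    by (rewrite exp_plus; ring).
  pose proof (exp_neg_taylor u Hu).
  pose proof (exp_sub1_abs_le e He).
  assert (Hq : 0 < exp (- u) <= 1)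
    by (split; [apply exp_pos | rewrite <- exp_0; apply exp_le_compat; lra]).
  assert (Rabs (exp (- u) * Q * (exp e - 1)) <= 3 * Rabs e).
  { rewrite Rabs_mult, (Rabs_right (exp (- u) * Q)) by (apply Rle_ge, Rmult_le_pos; lra).
    pose proof (Rabs_pos (exp e - 1)).
    assert (exp (- u) * Q <= 1) by nra. nra. }
  assert (Rabs (exp (- u) * (1 - Q)) <= 1 - Q)
    by (rewrite Rabs_right; nra).
  eapply Rle_trans; [apply Rabs_triang | rewrite Rabs_Ropp].
  pose proof (Rabs_triang (u - 1 + exp (- u)) (exp (- u) * Q * (exp e - 1))).
  lra.
Qed.

Definition G'' (lam x : R) : R := 3 * x / 4 - lam.

Lemma G_taylor lam x t :
  G lam (x + t) - G lam x = t * G' lam x + t ^ 2 * G'' lam x / 2 + t ^ 3 / 8.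
Proof. unfold G, G', G''. field. Qed.

Lemma G'_taylor lam x t : G' lam (x + t) - G' lam x = t * G'' lam x + 3 * t ^ 2 / 8.
Proof. unfold G', G''. field. Qed.

Lemma G'_lower lam x : 1 <= x -> 3 * lam <= x -> 7 / 80 * (x ^ 2 + lam ^ 2) <= G' lam x.
Proof. intros. unfold G'. destruct (Rle_or_lt lam 0); nra. Qed.

Lemma G'_upper lam x : G' lam x <= x ^ 2 + lam ^ 2.
Proof. unfold G'. pose proof (pow2_ge_0 (lam + x)). pose proof (pow2_ge_0 x). nra. Qed.

Lemma G'_pos lam x : 1 <= x -> 3 * lam <= x -> 0 < G' lam x.
Proof. intros Hx Hxl. pose proof (G'_lower lam x Hx Hxl). pose proof (pow2_ge_0 lam). nra. Qed.

Lemma G''_bounds lam x : 0 <= x -> 3 * lam <= x -> 5 * x / 12 <= G'' lam x <= x + Rabs lam.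
Proof.
  intros. unfold G''. pose proof (Rle_abs (- lam)). rewrite Rabs_Ropp in *. lra.
Qed.

Definition weight (r lam x : R) : R := Rpower x r * exp (- G lam x).

(* Laplace's approximation of the tail integral of [weight] from [x] to infinity. *)
Definition laplace_tail (r lam x : R) : R := weight r lam x / G' lam x.

Definition weight_defect (r lam x t : R) : R :=
  r * (ln (x + t) - ln x) - (t ^ 2 * G'' lam x / 2 + t ^ 3 / 8).

Lemma weight_pos r lam x : 0 < weight r lam x.
Proof. apply Rmult_lt_0_compat; apply exp_pos. Qed.

Lemma laplace_tail_pos r lam x : 1 <= x -> 3 * lam <= x -> 0 < laplace_tail r lam x.
Proof. intros. apply Rdiv_lt_0_compat; [apply weight_pos | apply G'_pos; assumption]. Qed.

Lemma weight_shift r lam x t :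
  weight r lam (x + t) = weight r lam x * exp (- (t * G' lam x) + weight_defect r lam x t).
Proof.
  unfold weight, weight_defect, Rpower. rewrite <- !exp_plus. f_equal.
  pose proof (G_taylor lam x t). lra.
Qed.

(* [weight_defect] is at most [r t - 5 t^2 / 24], whose maximum over [t] is [6/5 r^2]. *)
Lemma weight_decay r lam x t : 0 <= r -> 1 <= x -> 3 * lam <= x -> 0 <= t ->
  weight r lam (x + t) <= exp (6 / 5 * r ^ 2) * weight r lam x * exp (- (t * G' lam x)).
Proof.
  intros Hr Hx Hl Ht.
  rewrite weight_shift, (Rmult_comm (exp _)), Rmult_assoc, <- exp_plus.
  apply Rmult_le_compat_l; [apply Rlt_le, weight_pos | apply exp_le_compat].
  unfold weight_defect.
  pose proof (ln_shift_bounds x t ltac:(lra) Ht).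
  pose proof (G''_bounds lam x ltac:(lra) Hl).
  assert (t / x <= t) by (apply Rmult_le_reg_r with x; [lra | field_simplify; nra]).
  assert (r * (ln (x + t) - ln x) <= r * t) by nra.
  assert (5 / 24 * t ^ 2 <= t ^ 2 * G'' lam x / 2) by nra.
  assert (0 <= t ^ 3) by (apply pow_le; lra).
  pose proof (pow2_ge_0 (t - 12 / 5 * r)).
  nra.
Qed.

Definition sum_seq (a L : nat) (f : nat -> R) : R := fold_right Rplus 0 (map f (seq a L)).

Lemma sum_seq_S a L f : sum_seq a (S L) f = f a + sum_seq (S a) L f.
Proof. reflexivity. Qed.

Lemma sum_seq_ext a L f g :
  (forall j, (a <= j < a + L)%nat -> f j = g j) -> sum_seq a L f = sum_seq a L g.
Proof.
  intros H. unfold sum_seq. f_equal. apply map_ext_in.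
  intros j Hj. apply in_seq in Hj. apply H. lia.
Qed.

Lemma sum_seq_le a L f g :
  (forall j, (a <= j < a + L)%nat -> f j <= g j) -> sum_seq a L f <= sum_seq a L g.
Proof.
  revert a. induction L as [|L IH]; intros a H; [apply Rle_refl|].
  rewrite !sum_seq_S. apply Rplus_le_compat; [apply H | apply IH; intros; apply H]; lia.
Qed.

Lemma Rabs_sum_seq a L f : Rabs (sum_seq a L f) <= sum_seq a L (fun j => Rabs (f j)).
Proof.
  revert a. induction L as [|L IH]; intros a; [unfold sum_seq; simpl; rewrite Rabs_R0; lra|].
  rewrite !sum_seq_S. eapply Rle_trans; [apply Rabs_triang | apply Rplus_le_compat_l, IH].
Qed.

Lemma sum_seq_scal a L c f : sum_seq a L (fun j => c * f j) = c * sum_seq a L f.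
Proof.
  revert a. induction L as [|L IH]; intros a; [unfold sum_seq; simpl; ring|].
  rewrite !sum_seq_S, IH. ring.
Qed.

Lemma sum_seq_minus a L f g :
  sum_seq a L (fun j => f j - g j) = sum_seq a L f - sum_seq a L g.
Proof.
  revert a. induction L as [|L IH]; intros a; [unfold sum_seq; simpl; ring|].
  rewrite !sum_seq_S, IH. ring.
Qed.

Lemma sum_seq_telescope a L p : sum_seq a L (fun j => p j - p (S j)) = p a - p (a + L)%nat.
Proof.
  revert a. induction L as [|L IH]; intros a.
  - rewrite Nat.add_0_r. unfold sum_seq; simpl; ring.
  - rewrite sum_seq_S, IH. replace (a + S L)%nat with (S a + L)%nat by lia. ring.
Qed.

Lemma sum_seq_geom a L q : 0 <= q < 1 -> sum_seq a L (fun j => q ^ (j - a)) <= / (1 - q).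
Proof.
  intros Hq. assert (Hinv : 0 < / (1 - q)) by (apply Rinv_0_lt_compat; lra).
  revert a. induction L as [|L IH]; intros a; [unfold sum_seq; simpl; lra|].
  rewrite sum_seq_S, Nat.sub_diag.
  rewrite (sum_seq_ext (S a) L _ (fun j => q * q ^ (j - S a)))
    by (intros j Hj; replace (j - a)%nat with (S (j - S a)) by lia; reflexivity).
  rewrite sum_seq_scal.
  assert (q * sum_seq (S a) L (fun j => q ^ (j - S a)) <= q * / (1 - q))
    by (apply Rmult_le_compat_l; [lra | apply IH]).
  replace (/ (1 - q)) with (1 + q * / (1 - q)) by (field; lra).
  simpl. lra.
Qed.

(* One summand for each of the terms [u^2], [3 |e|] and [1 - Q] of [exp_perturb_bound]. *)
Definition step_const (r : R) : R := 1 + 3 * (80 / 7) * (r + 1) + 3 * (80 / 7) ^ 2.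

Section Mesh.

Variables (r lam X d : R).
Hypotheses (Hr : 0 <= r) (HX : 1 <= X) (Hlam : Rabs lam <= X) (Hd : 0 < d)
  (HdX : d * X ^ 5 <= 1 / 2) (Hrd : r * d <= 1 / 2).

Lemma mesh_le_half : d <= 1 / 2.
Proof. pose proof (pow_R1_Rle X 5 HX). nra. Qed.

Lemma lam_sq_le : lam ^ 2 <= X ^ 2.
Proof. rewrite <- pow2_abs. apply pow_incr. split; [apply Rabs_pos | exact Hlam]. Qed.

Lemma mesh_G'_cube x : 1 <= x <= X -> 3 * lam <= x -> d * G' lam x * x ^ 3 <= 1.
Proof.
  intros Hx Hxl.
  pose proof (G'_upper lam x). pose proof (G'_pos lam x (proj1 Hx) Hxl).
  pose proof lam_sq_le.
  assert (x ^ 2 <= X ^ 2) by (apply pow_incr; lra).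
  assert (Hx3 : 0 <= x ^ 3 <= X ^ 3) by (split; [apply pow_le | apply pow_incr]; lra).
  assert (d * G' lam x <= d * (2 * X ^ 2)) by (apply Rmult_le_compat_l; lra).
  assert (d * G' lam x * x ^ 3 <= d * (2 * X ^ 2) * X ^ 3)
    by (apply Rmult_le_compat; nra).
  replace (d * (2 * X ^ 2) * X ^ 3) with (2 * (d * X ^ 5)) in * by ring.
  lra.
Qed.

Lemma G_remainder_bounds x : 1 <= x <= X -> 3 * lam <= x ->
  0 <= d ^ 2 * G'' lam x / 2 + d ^ 3 / 8 /\
  (d ^ 2 * G'' lam x / 2 + d ^ 3 / 8) * x ^ 3 <= d.
Proof.
  intros Hx Hxl.
  pose proof mesh_le_half.
  pose proof (G''_bounds lam x ltac:(lra) Hxl).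
  assert (Hx3 : 1 <= x ^ 3 <= X ^ 3) by (split; [apply pow_R1_Rle | apply pow_incr]; lra).
  assert (HdX3 : d * X ^ 3 <= 1 / 2) by (pose proof (pow_R1_Rle X 2 HX); nra).
  assert (d * X ^ 4 <= 1 / 2) by (pose proof (pow_R1_Rle X 1 HX); nra).
  assert (HG'' : 0 <= G'' lam x * x ^ 3 <= 2 * X ^ 4).
  { split; [apply Rmult_le_pos; lra|].
    replace (2 * X ^ 4) with (2 * X * X ^ 3) by ring. apply Rmult_le_compat; lra. }
  assert (Hdd : 0 <= d ^ 2 * (G'' lam x * x ^ 3) <= 2 * (d * (d * X ^ 4))).
  { split; [apply Rmult_le_pos; [apply pow2_ge_0 | lra]|].
    replace (2 * (d * (d * X ^ 4))) with (d ^ 2 * (2 * X ^ 4)) by ring.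
    apply Rmult_le_compat_l; [apply pow2_ge_0 | lra]. }
  assert (Hd3 : 0 <= d ^ 3 * x ^ 3 <= d * (d * (d * X ^ 3))).
  { split; [apply Rmult_le_pos; [apply pow_le | ]; lra|].
    replace (d * (d * (d * X ^ 3))) with (d ^ 3 * X ^ 3) by ring.
    apply Rmult_le_compat_l; [apply pow_le |]; lra. }
  replace ((d ^ 2 * G'' lam x / 2 + d ^ 3 / 8) * x ^ 3)
    with (d ^ 2 * (G'' lam x * x ^ 3) / 2 + d ^ 3 * x ^ 3 / 8) by field.
  pose proof (pow2_ge_0 d). pose proof (pow_le d 3 ltac:(lra)).
  split; nra.
Qed.

Lemma weight_defect_bounds x : 1 <= x <= X -> 3 * lam <= x ->
  Rabs (weight_defect r lam x d) <= 1 /\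
  Rabs (weight_defect r lam x d) * x ^ 3 <= 80 / 7 * (r + 1) * (d * G' lam x).
Proof.
  intros Hx Hxl. unfold weight_defect.
  pose proof (G_remainder_bounds x Hx Hxl) as HD.
  set (D := d ^ 2 * G'' lam x / 2 + d ^ 3 / 8) in *.
  set (L := r * (ln (x + d) - ln x)).
  pose proof mesh_le_half.
  assert (Hx3 : 1 <= x ^ 3) by (apply pow_R1_Rle; lra).
  assert (HL : 0 <= L <= r * d / x).
  { pose proof (ln_shift_bounds x d ltac:(lra) ltac:(lra)).
    unfold L. replace (r * d / x) with (r * (d / x)) by (unfold Rdiv; ring).
    split; [apply Rmult_le_pos | apply Rmult_le_compat_l]; lra. }
  assert (Hrdx : r * d / x * x ^ 3 = r * d * x ^ 2) by (field; lra).
  assert (Hdx : r * d / x <= r * d).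
  { unfold Rdiv. rewrite <- (Rmult_1_r (r * d)) at 2.
    apply Rmult_le_compat_l; [nra|]. rewrite <- Rinv_1. apply Rinv_le_contravar; lra. }
  assert (Habs : Rabs (L - D) <= L + D) by (apply Rabs_le; lra).
  pose proof (G'_lower lam x (proj1 Hx) Hxl). pose proof (pow2_ge_0 lam).
  split; [nra|].
  assert (L * x ^ 3 <= r * d * x ^ 2) by nra.
  assert (Hx2 : 1 <= x ^ 2 <= 80 / 7 * G' lam x) by (split; nra).
  assert (Habs3 : Rabs (L - D) * x ^ 3 <= (L + D) * x ^ 3)
    by (apply Rmult_le_compat_r; [apply pow_le |]; lra).
  assert (r * d * x ^ 2 <= r * d * (80 / 7 * G' lam x))
    by (apply Rmult_le_compat_l; [apply Rmult_le_pos |]; lra).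
  assert (d <= d * (80 / 7 * G' lam x)) by nra.
  nra.
Qed.

Lemma G'_ratio_bounds x : 1 <= x <= X -> 3 * lam <= x ->
  0 < G' lam x / G' lam (x + d) <= 1 /\
  (1 - G' lam x / G' lam (x + d)) * x ^ 3 <= 3 * (80 / 7) ^ 2 * (d * G' lam x).
Proof.
  intros Hx Hxl.
  pose proof mesh_le_half.
  pose proof (G'_taylor lam x d) as Hdiff.
  pose proof (G''_bounds lam x ltac:(lra) Hxl).
  pose proof (G'_lower lam x (proj1 Hx) Hxl) as Hlow.
  set (gx := G' lam x) in *. set (gy := G' lam (x + d)) in *.
  assert (Hgx : 0 < gx) by (pose proof (pow2_ge_0 lam); nra).
  assert (Hgrow : 0 <= gy - gx <= d * (x + Rabs lam + 1)) by nra.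
  assert (HQ : 0 < gx / gy <= 1)
    by (split; [apply Rdiv_lt_0_compat | apply Rmult_le_reg_r with gy;
                 [| unfold Rdiv; rewrite Rmult_assoc, Rinv_l]]; lra).
  split; [exact HQ|].
  assert (Hpoly : (x + Rabs lam + 1) * x ^ 3 <= 3 * (x ^ 2 + lam ^ 2) ^ 2).
  { rewrite <- (pow2_abs lam). pose proof (Rabs_pos lam).
    pose proof (pow2_ge_0 (x - Rabs lam)). assert (x ^ 3 <= x ^ 4) by (simpl; nra). nra. }
  assert (Hsq : (x ^ 2 + lam ^ 2) ^ 2 <= (80 / 7) ^ 2 * gx ^ 2).
  { rewrite <- Rpow_mult_distr. apply pow_incr. pose proof (pow2_ge_0 lam); nra. }
  assert (H1Q : (1 - gx / gy) * gx <= gy - gx).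
  { replace ((1 - gx / gy) * gx) with ((gy - gx) * (gx / gy)) by (field; lra).
    rewrite <- (Rmult_1_r (gy - gx)) at 2. apply Rmult_le_compat_l; lra. }
  apply Rmult_le_reg_r with gx; [exact Hgx|].
  assert (Hx3 : 0 <= x ^ 3) by (apply pow_le; lra).
  apply Rle_trans with (d * ((x + Rabs lam + 1) * x ^ 3)).
  - replace ((1 - gx / gy) * x ^ 3 * gx) with ((1 - gx / gy) * gx * x ^ 3) by ring.
    replace (d * ((x + Rabs lam + 1) * x ^ 3)) with (d * (x + Rabs lam + 1) * x ^ 3) by ring.
    apply Rmult_le_compat_r; lra.
  - replace (3 * (80 / 7) ^ 2 * (d * gx) * gx) with (d * (3 * ((80 / 7) ^ 2 * gx ^ 2))) by ring.
    apply Rmult_le_compat_l; lra.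
Qed.

Lemma laplace_tail_step x : 1 <= x <= X -> 3 * lam <= x ->
  Rabs (d * weight r lam x - (laplace_tail r lam x - laplace_tail r lam (x + d)))
  <= step_const r * (d * weight r lam x / x ^ 3).
Proof.
  intros Hx Hxl.
  destruct (weight_defect_bounds x Hx Hxl) as [He1 He3].
  destruct (G'_ratio_bounds x Hx Hxl) as [HQ HQ3].
  pose proof (mesh_G'_cube x Hx Hxl) as Hcube.
  pose proof (G'_pos lam x (proj1 Hx) Hxl) as Hgx.
  assert (Hgy : 0 < G' lam (x + d)) by (apply G'_pos; lra).
  pose proof (laplace_tail_pos r lam x (proj1 Hx) Hxl) as Hphi.
  assert (Hx3 : 1 <= x ^ 3) by (apply pow_R1_Rle; lra).
  set (u := d * G' lam x) in *.
  set (e := weight_defect r lam x d) in *.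
  set (Q := G' lam x / G' lam (x + d)) in *.
  assert (Hu : 0 <= u <= 1) by (split; [unfold u |]; nra).
  assert (Hid : d * weight r lam x - (laplace_tail r lam x - laplace_tail r lam (x + d))
                = laplace_tail r lam x * (u - 1 + exp (- u + e) * Q)).
  { unfold laplace_tail, u, e, Q. rewrite weight_shift. field. lra. }
  assert (HW : (u ^ 2 + 3 * Rabs e + (1 - Q)) * x ^ 3 <= step_const r * u).
  { assert (u ^ 2 * x ^ 3 <= u) by (replace (u ^ 2 * x ^ 3) with (u * (u * x ^ 3)) by ring; nra).
    unfold step_const. nra. }
  rewrite Hid, Rabs_mult, (Rabs_right (laplace_tail r lam x)) by lra.
  apply Rle_trans with (laplace_tail r lam x * (step_const r * u / x ^ 3)).
  - apply Rmult_le_compat_l; [lra|].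
    apply Rmult_le_reg_r with (x ^ 3); [lra|].
    replace (step_const r * u / x ^ 3 * x ^ 3) with (step_const r * u) by (field; lra).
    pose proof (exp_perturb_bound u e Q Hu He1 HQ).
    apply Rle_trans with ((u ^ 2 + 3 * Rabs e + (1 - Q)) * x ^ 3); [|exact HW].
    apply Rmult_le_compat_r; lra.
  - right. unfold laplace_tail, u. field. lra.
Qed.

Lemma laplace_tail_step_from x y : 1 <= x -> x <= y -> y <= X -> 3 * lam <= x ->
  Rabs (d * weight r lam y - (laplace_tail r lam y - laplace_tail r lam (y + d)))
  <= step_const r / x ^ 3 * (d * weight r lam y).
Proof.
  intros Hx Hxy HyX Hxl.
  eapply Rle_trans; [apply laplace_tail_step; lra|].
  assert (Hx3 : 0 < x ^ 3 <= y ^ 3) by (split; [apply pow_lt | apply pow_incr]; lra).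
  assert (Hc : 0 <= step_const r * (d * weight r lam y))
    by (apply Rmult_le_pos; [unfold step_const; lra | pose proof (weight_pos r lam y); nra]).
  replace (step_const r * (d * weight r lam y / y ^ 3))
    with (step_const r * (d * weight r lam y) * / y ^ 3) by (unfold Rdiv; ring).
  replace (step_const r / x ^ 3 * (d * weight r lam y))
    with (step_const r * (d * weight r lam y) * / x ^ 3) by (unfold Rdiv; ring).
  apply Rmult_le_compat_l; [exact Hc | apply Rinv_le_contravar; lra].
Qed.

Lemma sum_weight_le a L : 1 <= INR a * d <= X -> 3 * lam <= INR a * d ->
  d * sum_seq a L (fun j => weight r lam (INR j * d))
  <= 2 * exp (6 / 5 * r ^ 2) * laplace_tail r lam (INR a * d).
Proof.
  intros Hx Hxl.
  set (x := INR a * d) in *.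
  pose proof (G'_pos lam x (proj1 Hx) Hxl) as Hg.
  pose proof (mesh_G'_cube x Hx Hxl) as Hcube.
  assert (Hx3 : 1 <= x ^ 3) by (apply pow_R1_Rle; lra).
  set (u := d * G' lam x) in *.
  assert (Hu : 0 < u <= 1) by (split; [unfold u; nra | nra]).
  set (q := exp (- u)).
  assert (Hq : 0 <= q <= 1 - u / 2).
  { pose proof (exp_ineq1_le u).
    assert (q * exp u = 1) by (unfold q; rewrite <- exp_plus, Rplus_opp_l; apply exp_0).
    assert (0 < q) by apply exp_pos. split; nra. }
  set (K := exp (6 / 5 * r ^ 2)).
  assert (Hdecay : forall j, (a <= j < a + L)%nat ->
            weight r lam (INR j * d) <= K * weight r lam x * q ^ (j - a)).
  { intros j Hj.
    replace (INR j * d) with (x + INR (j - a) * d)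
      by (unfold x; rewrite minus_INR by lia; ring).
    replace (q ^ (j - a)) with (exp (- (INR (j - a) * d * G' lam x))).
    - apply weight_decay; try lra. apply Rmult_le_pos; [apply pos_INR | lra].
    - unfold q. rewrite <- Rpower_pow by apply exp_pos. unfold Rpower, u.
      rewrite ln_exp. f_equal. ring. }
  apply sum_seq_le in Hdecay.
  rewrite sum_seq_scal in Hdecay.
  pose proof (sum_seq_geom a L q ltac:(lra)) as Hgeom.
  assert (Hinv : / (1 - q) <= 2 / u).
  { replace (2 / u) with (/ (u / 2)) by (field; lra).
    apply Rinv_le_contravar; lra. }
  assert (HKw : 0 <= K * weight r lam x)
    by (apply Rmult_le_pos; [apply Rlt_le, exp_pos | apply Rlt_le, weight_pos]).
  apply Rle_trans with (d * (K * weight r lam x * (2 / u))).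
  - apply Rmult_le_compat_l; [lra|]. eapply Rle_trans; [exact Hdecay|].
    apply Rmult_le_compat_l; lra.
  - right. unfold laplace_tail, u. field. lra.
Qed.

Lemma riemann_sum_laplace a L : 1 <= INR a * d <= X -> 3 * lam <= INR a * d ->
  (forall j, (a <= j < a + L)%nat -> INR j * d <= X) ->
  Rabs (d * sum_seq a L (fun j => weight r lam (INR j * d)) - laplace_tail r lam (INR a * d))
  <= step_const r * (2 * exp (6 / 5 * r ^ 2))
       * (laplace_tail r lam (INR a * d) / (INR a * d) ^ 3)
     + laplace_tail r lam (INR (a + L) * d).
Proof.
  intros Hx Hxl HjX.
  set (x := INR a * d) in *.
  set (p := fun j => laplace_tail r lam (INR j * d)).
  assert (Hpos : forall j, (a <= j)%nat -> x <= INR j * d).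
  { intros j Hj. apply Rmult_le_compat_r; [lra | apply le_INR, Hj]. }
  assert (Hid : d * sum_seq a L (fun j => weight r lam (INR j * d)) - p a
                = sum_seq a L (fun j => d * weight r lam (INR j * d) - (p j - p (S j)))
                  - p (a + L)%nat).
  { rewrite sum_seq_minus, sum_seq_scal, sum_seq_telescope. ring. }
  change (laplace_tail r lam x) with (p a). rewrite Hid.
  assert (HpL : 0 < p (a + L)%nat)
    by (apply laplace_tail_pos; pose proof (Hpos (a + L)%nat ltac:(lia)); lra).
  eapply Rle_trans; [apply Rabs_triang|].
  rewrite Rabs_Ropp, (Rabs_right (p (a + L)%nat)) by lra.
  apply Rplus_le_compat_r.
  eapply Rle_trans; [apply Rabs_sum_seq|].
  assert (Hx3 : 0 < x ^ 3) by (apply pow_lt; lra).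
  apply Rle_trans with
    (sum_seq a L (fun j => step_const r / x ^ 3 * (d * weight r lam (INR j * d)))).
  - apply sum_seq_le. intros j Hj.
    unfold p. rewrite S_INR, Rmult_plus_distr_r, Rmult_1_l.
    apply laplace_tail_step_from; [lra | apply Hpos; lia | apply HjX, Hj | lra].
  - rewrite sum_seq_scal, sum_seq_scal.
    pose proof (sum_weight_le a L Hx Hxl) as Hsum. fold x in Hsum.
    apply Rle_trans with (step_const r / x ^ 3 * (2 * exp (6 / 5 * r ^ 2) * p a)).
    + apply Rmult_le_compat_l; [|exact Hsum].
      apply Rmult_le_pos; [unfold step_const; lra | apply Rlt_le, Rinv_0_lt_compat; lra].
    + right. field. lra.
Qed.
End Mesh.

Lemma laplace_tail_far r lam X Y : 0 <= r -> 1 <= X -> 3 * lam <= X -> X <= Y <= 2 * X ->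
  laplace_tail r lam Y <= 80 / 7 * Rpower 2 r * (Rpower X (r - 2) * exp (- G lam X)).
Proof.
  intros Hr HX Hl HY.
  assert (HGmono : G lam X <= G lam Y).
  { pose proof (G_taylor lam X (Y - X)) as Ht. replace (X + (Y - X)) with Y in Ht by ring.
    pose proof (G'_pos lam X HX Hl). pose proof (G''_bounds lam X ltac:(lra) Hl).
    assert (0 <= Y - X) by lra.
    assert (0 <= (Y - X) ^ 2 * G'' lam X) by (apply Rmult_le_pos; [apply pow2_ge_0 | lra]).
    assert (0 <= (Y - X) ^ 3) by (apply pow_le; lra).
    nra. }
  assert (HpowY : Rpower Y r <= Rpower 2 r * Rpower X r).
  { rewrite Rpower_mult_distr by lra. apply Rle_Rpower_l; lra. }
  assert (HG'Y : 7 / 80 * X ^ 2 <= G' lam Y).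
  { pose proof (G'_lower lam Y ltac:(lra) ltac:(lra)).
    assert (X ^ 2 <= Y ^ 2) by (apply pow_incr; lra). pose proof (pow2_ge_0 lam). lra. }
  assert (HX2 : 0 < X ^ 2) by (apply pow_lt; lra).
  assert (HpowX : Rpower X (r - 2) = Rpower X r / X ^ 2).
  { unfold Rminus. rewrite Rpower_plus, Rpower_Ropp, <- (Rpower_pow 2 X) by lra.
    replace (INR 2) with 2 by (simpl; ring). reflexivity. }
  rewrite HpowX. unfold laplace_tail, weight.
  apply Rle_trans with (Rpower 2 r * Rpower X r * exp (- G lam X) / (7 / 80 * X ^ 2)).
  - unfold Rdiv. apply Rmult_le_compat.
    + apply Rmult_le_pos; apply Rlt_le, exp_pos.
    + apply Rlt_le, Rinv_0_lt_compat. lra.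
    + apply Rmult_le_compat; try (apply Rlt_le, exp_pos); [exact HpowY | apply exp_le_compat; lra].
    + apply Rinv_le_contravar; lra.
  - right. field. lra.
Qed.

Lemma nfloor_spec y : 0 <= y -> INR (nfloor y) <= y < INR (nfloor y) + 1.
Proof.
  intros Hy. unfold nfloor. destruct (base_Int_part y) as [H1 H2].
  assert (Hz : (0 <= Int_part y)%Z).
  { assert (Hlt : IZR (-1) < IZR (Int_part y)) by (simpl; lra).
    apply lt_IZR in Hlt. lia. }
  rewrite INR_IZR_INZ, Z2Nat.id by exact Hz. lra.
Qed.

Lemma weighted_sum_estimate r lam X k : 0 <= r -> 2 + 2 * r <= X -> Rabs lam <= X ->
  Rmax 1 (3 * lam) * X ^ 8 <= INR k -> INR k <= X ^ 9 ->
  Rabs (/ X ^ 8 * sum_range k (nfloor (X ^ 9)) (fun j => weight r lam (INR j / X ^ 8))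
        - laplace_tail r lam (INR k / X ^ 8))
  <= step_const r * (2 * exp (6 / 5 * r ^ 2))
       * (laplace_tail r lam (INR k / X ^ 8) / (INR k / X ^ 8) ^ 3)
     + 80 / 7 * Rpower 2 r * (Rpower X (r - 2) * exp (- G lam X)).
Proof.
  intros Hr HX Hlam Hk1 Hk2.
  assert (HX7 : 1 <= X ^ 7) by (apply pow_R1_Rle; lra).
  assert (HX8 : X <= X ^ 8) by (change (X ^ 8) with (X * X ^ 7); nra).
  set (d := / X ^ 8).
  assert (Hd : 0 < d) by (apply Rinv_0_lt_compat; lra).
  assert (HdX8 : d * X ^ 8 = 1) by (apply Rinv_l; lra).
  assert (HdX : d * X ^ 5 <= 1 / 2).
  { assert (HX3 : 2 <= X ^ 3) by (pose proof (pow_R1_Rle X 2 ltac:(lra)); simpl in *; nra).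
    replace (X ^ 8) with (X ^ 3 * X ^ 5) in HdX8 by ring. nra. }
  assert (Hrd : r * d <= 1 / 2) by nra.
  change (fun j => weight r lam (INR j / X ^ 8)) with (fun j => weight r lam (INR j * d)).
  change (INR k / X ^ 8) with (INR k * d).
  pose proof (Rmax_l 1 (3 * lam)). pose proof (Rmax_r 1 (3 * lam)).
  assert (Hx : 1 <= INR k * d <= X) by (split; nra).
  assert (Hxl : 3 * lam <= INR k * d) by nra.
  assert (HX9 : 0 <= X ^ 9) by (apply pow_le; lra).
  destruct (nfloor_spec (X ^ 9) HX9) as [HM1 HM2].
  set (M := nfloor (X ^ 9)) in *.
  assert (HkM : (k < S M)%nat) by (apply INR_lt; rewrite S_INR; lra).
  change (sum_range k M ?f) with (sum_seq k (S M - k) f).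
  eapply Rle_trans.
  - apply (riemann_sum_laplace r lam X d); try lra.
    intros j Hj. assert (INR j <= INR M) by (apply le_INR; lia). nra.
  - replace (k + (S M - k))%nat with (S M) by lia.
    apply Rplus_le_compat_l, laplace_tail_far; try lra.
    rewrite S_INR. split; nra.
Qed.

Definition sum_const (r : R) : R :=
  step_const r * (2 * exp (6 / 5 * r ^ 2)) + 80 / 7 * Rpower 2 r.

Lemma weighted_sum_bound r lam X k : 0 <= r -> 2 + 2 * r <= X -> Rabs lam <= X ->
  Rmax 1 (3 * lam) * X ^ 8 <= INR k -> INR k <= X ^ 9 ->
  let x := INR k / X ^ 8 in
  let g := Rpower x r / G' lam x * exp (- G lam x) in
  Rabs (/ X ^ 8 * sum_range k (nfloor (X ^ 9))
                    (fun j => Rpower (INR j / X ^ 8) r * exp (- G lam (INR j / X ^ 8)))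
        - g)
  <= sum_const r * Rabs g * ((X ^ 12) ^ 2 / INR k ^ 3)
     + sum_const r * (Rpower X (r - 2) * exp (- G lam X)).
Proof.
  intros Hr HX Hlam Hk1 Hk2 x g.
  assert (HX8 : 0 < X ^ 8) by (apply pow_lt; lra).
  assert (Hk0 : 0 < INR k) by (pose proof (Rmax_l 1 (3 * lam)); nra).
  assert (Hg : g = laplace_tail r lam x) by (unfold g, laplace_tail, weight, Rdiv; ring).
  assert (Hscale : laplace_tail r lam x / x ^ 3
                   = laplace_tail r lam x * ((X ^ 12) ^ 2 / INR k ^ 3))
    by (unfold x; field; lra).
  assert (Hc : 0 <= (X ^ 12) ^ 2 / INR k ^ 3)
    by (apply Rmult_le_pos; [apply pow2_ge_0 | apply Rlt_le, Rinv_0_lt_compat, pow_lt; lra]).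
  assert (HT : 0 <= Rpower X (r - 2) * exp (- G lam X))
    by (apply Rmult_le_pos; apply Rlt_le, exp_pos).
  pose proof (Rle_abs g).
  rewrite Hg. eapply Rle_trans; [apply weighted_sum_estimate; assumption|].
  fold x. rewrite Hscale, <- Hg. unfold sum_const.
  set (CA := step_const r * (2 * exp (6 / 5 * r ^ 2))).
  set (CB := 80 / 7 * Rpower 2 r).
  assert (HCA : 0 <= CA)
    by (apply Rmult_le_pos; [unfold step_const | pose proof (exp_pos (6 / 5 * r ^ 2))]; lra).
  assert (HCB : 0 <= CB) by (pose proof (exp_pos (r * ln 2)); unfold CB, Rpower; lra).
  apply Rplus_le_compat; [|apply Rmult_le_compat_r; lra].
  rewrite Rmult_assoc.
  apply Rle_trans with (CA * (Rabs g * ((X ^ 12) ^ 2 / INR k ^ 3))).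
  - apply Rmult_le_compat_l, Rmult_le_compat_r; lra.
  - apply Rmult_le_compat_r; [apply Rmult_le_pos; [apply Rabs_pos | lra] | lra].
Qed.

Lemma Rpower_div12 n m : 0 < n -> Rpower n (INR m / 12) = Rpower n (1 / 12) ^ m.
Proof.
  intros Hn. rewrite <- Rpower_pow by apply exp_pos.
  rewrite Rpower_mult. f_equal. field.
Qed.

Lemma Rpower_div12_ge B n : 0 < B -> B ^ 12 <= n -> B <= Rpower n (1 / 12).
Proof.
  intros HB Hn. replace B with (Rpower (B ^ 12) (1 / 12)) at 1.
  - apply Rle_Rpower_l; [lra | split; [apply pow_lt |]; lra].
  - rewrite <- Rpower_pow, Rpower_mult by lra.
    replace (INR 12 * (1 / 12)) with 1 by (simpl; field). apply Rpower_1; lra.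
Qed.

Theorem lemma5p3 :
  forall r : R, 0 <= r ->
  exists C : R, exists N : nat,
  forall (n : nat) (lam : R) (k : nat),
    (N <= n)%nat ->
    Rmax 1 (3 * lam) * Rpower (INR n) (2 / 3) <= INR k ->
    INR k <= Rpower (INR n) (3 / 4) ->
    Rabs lam <= Rpower (INR n) (1 / 12) ->
    let s := Rpower (INR n) (2 / 3) in
    let x := INR k / s in
    let g := Rpower x r / G' lam x * exp (- G lam x) in
    Rabs (/ s * sum_range k (nfloor (Rpower (INR n) (3 / 4)))
                 (fun j => Rpower (INR j / s) r * exp (- G lam (INR j / s)))
          - g)
    <= C * Rabs g * (INR n ^ 2 / INR k ^ 3)
       + C * (Rpower (INR n) ((r - 2) / 12) * exp (- G lam (Rpower (INR n) (1 / 12)))).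
Proof.
  intros r Hr.
  destruct (INR_archimed 1 ((2 + 2 * r) ^ 12) Rlt_0_1) as [N HN].
  exists (sum_const r), N.
  intros n lam k HnN Hk1 Hk2 Hlam.
  assert (Hn : (2 + 2 * r) ^ 12 <= INR n) by (apply le_INR in HnN; lra).
  assert (Hn0 : 0 < INR n) by (pose proof (pow_R1_Rle (2 + 2 * r) 12 ltac:(lra)); lra).
  pose proof (Rpower_div12_ge (2 + 2 * r) (INR n) ltac:(lra) Hn) as HX.
  set (X := Rpower (INR n) (1 / 12)) in *.
  assert (Es : Rpower (INR n) (2 / 3) = X ^ 8)
    by (unfold X; rewrite <- Rpower_div12 by lra; f_equal; simpl; field).
  assert (E34 : Rpower (INR n) (3 / 4) = X ^ 9)
    by (unfold X; rewrite <- Rpower_div12 by lra; f_equal; simpl; field).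
  assert (En : INR n = X ^ 12).
  { unfold X. rewrite <- Rpower_div12 by lra.
    replace (INR 12 / 12) with 1 by (simpl; field). symmetry. apply Rpower_1; lra. }
  assert (Etail : Rpower (INR n) ((r - 2) / 12) = Rpower X (r - 2))
    by (unfold X; rewrite Rpower_mult; f_equal; field).
  rewrite Es, E34, Etail in *. rewrite En.
  apply weighted_sum_bound; assumption.
Qed.
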